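(* Let $d\ge 1$ and $N_1,\ldots,N_d\ge 1$ be integers. For each $j\in\{1,\ldots,d\}$ let $p_j,q_j:\{0,1,\ldots,N_j\}\to[0,1]$ satisfy $p_j(0)=q_j(0)=p_j(N_j)=q_j(N_j)=0$, $p_j(i)>0$ and $q_j(i)>0$ for $1\le i\le N_j-1$, and assume $\sum_{k=1}^d\big(p_k(i_k)+q_k(i_k)\big)\le 1$ for every $(i_1,\ldots,i_d)$ with $1\le i_k\le N_k$. Let $Z'$ be the Markov chain on $\mathbb E'=\{(i_1,\ldots,i_d):1\le i_j\le N_j,\ 1\le j\le d\}\cup\{-\infty\}$ with transition probabilities, for $(i_1,\ldots,i_d)\ne-\infty$: $P((i_1,\ldots,i_d),(i_1,\ldots,i_d)+\mathbf s_j)=p_j(i_j)$; $P((i_1,\ldots,i_d),(i_1,\ldots,i_d)-\mathbf s_j)=q_j(i_j)$ whenever $i_j\ge 2$; $P((i_1,\ldots,i_d),-\infty)=\sum_{j:\,i_j=1}q_j(1)$; $P((i_1,\ldots,i_d),(i_1,\ldots,i_d))=1-\sum_{k=1}^d\big(p_k(i_k)+q_k(i_k)\big)$; all other transitions from $(i_1,\ldots,i_d)$ have probability $0$; and $P(-\infty,-\infty)=1$. Here $\mathbf s_j$ is the $j$-th unit vector. (Then $(N_1,\ldots,N_d)$ and $-\infty$ are absorbing.) For $\tau_{\mathbf e}=\inf\{n\ge 0: Z'_n=\mathbf e\}$, define $\rho((i_1,\ldots,i_d))=P\big(\tau_{(N_1,\ldots,N_d)}<\tau_{-\infty}\mid Z'_0=(i_1,\ldots,i_d)\big)$.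 Then for every $(i_1,\ldots,i_d)$ with $1\le i_j\le N_j$, $$\rho((i_1,\ldots,i_d))=\frac{\prod_{j=1}^d\left(\sum_{n_j=1}^{i_j}\prod_{r=1}^{n_j-1}\frac{q_j(r)}{p_j(r)}\right)}{\prod_{j=1}^d\left(\sum_{n_j=1}^{N_j}\prod_{r=1}^{n_j-1}\frac{q_j(r)}{p_j(r)}\right)},$$ with empty products equal to $1$.
   Context: Interpretation: one player plays against $d$ others; $i_j$ is the player's current fortune against player $j$, $N_j$ the total money in that pair; reaching $i_j=0$ for some $j$ means losing (state $-\infty$), reaching $(N_1,\ldots,N_d)$ means winning. *)

From Stdlib Require Import Reals List Arith.
Import ListNotations.
Open Scope R_scope.

Definition sumR (l : list nat) (f : nat -> R) : R := fold_right (fun k acc => f k + acc) 0 l.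
Definition prodR (l : list nat) (f : nat -> R) : R := fold_right (fun k acc => f k * acc) 1 l.

(* Coordinates are indexed by j = 1..d; a state (i_1,...,i_d) is a function
   i : nat -> nat (only the values at 1..d matter).  The state space E' is
   option (nat -> nat), with None = -infinity. *)

Definition upd (i : nat -> nat) (j v : nat) : nat -> nat :=
  fun k => if Nat.eqb k j then v else i k.

Definition is_top (d : nat) (N : nat -> nat) (i : nat -> nat) : bool :=
  forallb (fun j => Nat.eqb (i j) (N j)) (seq 1 d).

Definition trans (d : nat) (p q : nat -> nat -> R) (i : nat -> nat)
  : list (R * option (nat -> nat)) :=
  map (fun j => (p j (i j), Some (upd i j (S (i j))))) (seq 1 d)
  ++ flat_map (fun j => if Nat.leb 2 (i j)
                        then [(q j (i j), Some (upd i j (pred (i j))))] else [])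
              (seq 1 d)
  ++ [ (sumR (seq 1 d) (fun j => if Nat.eqb (i j) 1%nat then q j 1%nat else 0), None) ;
       (1 - sumR (seq 1 d) (fun k => p k (i k) + q k (i k)), Some i) ].

(* hit d N p q n x = P( tau_{(N_1..N_d)} <= n  and  tau_{(N_1..N_d)} < tau_{-inf} | Z'_0 = x ),
   computed by first-step decomposition of the n-step path probability. *)
Fixpoint hit (d : nat) (N : nat -> nat) (p q : nat -> nat -> R) (n : nat)
  (x : option (nat -> nat)) {struct n} : R :=
  match x with
  | None => 0
  | Some i =>
      if is_top d N i then 1 else
      match n with
      | O => 0
      | S m => fold_right (fun py acc => fst py * hit d N p q m (snd py) + acc) 0
                          (trans d p q i)
      end
  end.

Definition Ssum (p q : nat -> nat -> R) (j m : nat) : R :=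
  sumR (seq 1 m) (fun n => prodR (seq 1 (n - 1)) (fun r => q j r / p j r)).

From Pilot Require Import Defs.
From Stdlib Require Import Reals List Arith Lia Lra ClassicalEpsilon FunctionalExtensionality.
Import ListNotations.
Open Scope R_scope.

(** The candidate [rho] is a product of one-dimensional gambler's-ruin
    solutions, so it is harmonic for the chain, equals 1 at the top state and
    0 at [-infinity].  By induction on [n], [hit n <= rho] and [hit n] is
    nondecreasing, so [hit n] converges to a harmonic [L <= rho].  The
    difference [rho - L] is nonnegative, harmonic and vanishes at both
    absorbing states; at a maximum it has the same value at every up-step
    (these have positive probability), so climbing to the top state shows the
    maximum is 0. *)

Section Expectation.
Context {A : Type}.

Definition expect (g : A -> R) (l : list (R * A)) : R :=
  fold_right (fun py acc => fst py * g (snd py) + acc) 0 l.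

Lemma expect_app g l1 l2 : expect g (l1 ++ l2) = expect g l1 + expect g l2.
Proof. induction l1 as [|a l1 IH]; simpl; [ring|]. unfold expect in *; simpl. rewrite IH; ring. Qed.

Lemma expect_map g (h : nat -> R * A) l :
  expect g (map h l) = sumR l (fun j => fst (h j) * g (snd (h j))).
Proof. induction l as [|a l IH]; simpl; auto. unfold expect in *; simpl. rewrite IH; ring. Qed.

Lemma expect_flat_map g (F : nat -> list (R * A)) l :
  expect g (flat_map F l) = sumR l (fun j => expect g (F j)).
Proof. induction l as [|a l IH]; simpl; auto. rewrite expect_app, IH; ring. Qed.

Lemma expect_sub g h l : expect (fun y => g y - h y) l = expect g l - expect h l.
Proof. induction l as [|a l IH]; unfold expect in *; simpl; [ring|]. rewrite IH; ring. Qed.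

Lemma expect_const c l : expect (fun _ => c) l = c * expect (fun _ => 1) l.
Proof. induction l as [|a l IH]; unfold expect in *; simpl; [ring|]. rewrite IH; ring. Qed.

Lemma expect_le u w l :
  (forall py, In py l -> 0 <= fst py /\ (fst py = 0 \/ u (snd py) <= w (snd py))) ->
  expect u l <= expect w l.
Proof.
  induction l as [|[a y] l IH]; intros H; unfold expect in *; simpl; [lra|].
  specialize (IH (fun py h => H py (or_intror h))).
  destruct (H (a, y) (or_introl eq_refl)) as [Ha [Ha0|Hy]]; simpl in *; [subst; lra|].
  pose proof (Rmult_le_compat_l a _ _ Ha Hy). lra.
Qed.

Lemma expect_nonpos h l :
  (forall py, In py l -> fst py * h (snd py) <= 0) -> expect h l <= 0.
Proof.
  induction l as [|a l IH]; intros H; unfold expect in *; simpl; [lra|].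
  pose proof (H a (or_introl eq_refl)). pose proof (IH (fun py h => H py (or_intror h))). lra.
Qed.

Lemma expect_nonpos_eq0 h l :
  (forall py, In py l -> fst py * h (snd py) <= 0) -> expect h l = 0 ->
  forall py, In py l -> fst py * h (snd py) = 0.
Proof.
  induction l as [|a l IH]; simpl; intros H E py Hin; [contradiction|].
  unfold expect in E; simpl in E; fold (expect h l) in E.
  pose proof (expect_nonpos h l (fun py h => H py (or_intror h))).
  pose proof (H a (or_introl eq_refl)).
  destruct Hin as [<-|Hin]; [lra|]. apply IH; auto; lra.
Qed.

Lemma expect_cv (u : nat -> A -> R) (L : A -> R) l :
  (forall py, In py l -> fst py = 0 \/ Un_cv (fun n => u n (snd py)) (L (snd py))) ->
  Un_cv (fun n => expect (u n) l) (expect L l).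
Proof.
  induction l as [|[a y] l IH]; intros H; unfold expect; simpl.
  - intros e He; exists 0%nat; intros; unfold R_dist. rewrite Rminus_diag, Rabs_R0; lra.
  - fold (expect L l). change (Un_cv (fun n => a * u n y + expect (u n) l) (a * L y + expect L l)).
    apply CV_plus; [|apply IH; intros py Hpy; apply H; right; auto].
    destruct (H (a, y) (or_introl eq_refl)) as [E|E]; simpl in E.
    + subst. intros e He; exists 0%nat; intros; unfold R_dist.
      replace (0 * u n y - 0 * L y) with 0 by ring. rewrite Rabs_R0; lra.
    + apply CV_mult; auto. intros e He; exists 0%nat; intros; unfold R_dist.
      rewrite Rminus_diag, Rabs_R0; lra.
Qed.

End Expectation.

Lemma sumR_ext l f g : (forall k, In k l -> f k = g k) -> sumR l f = sumR l g.
Proof. induction l; simpl; intros H; auto. rewrite H, IHl; auto. Qed.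

Lemma sumR_plus l f g : sumR l (fun k => f k + g k) = sumR l f + sumR l g.
Proof. induction l; simpl; [ring|]. rewrite IHl; ring. Qed.

Lemma sumR_mult_r l f c : sumR l (fun k => f k * c) = sumR l f * c.
Proof. induction l; simpl; [ring|]. rewrite IHl; ring. Qed.

Lemma sumR_app l1 l2 f : sumR (l1 ++ l2) f = sumR l1 f + sumR l2 f.
Proof. induction l1; simpl; [ring|]. rewrite IHl1; ring. Qed.

Lemma sumR_minus l f g : sumR l (fun k => f k - g k) = sumR l f - sumR l g.
Proof. induction l; simpl; [ring|]. rewrite IHl; ring. Qed.

Lemma sumR_nonneg l f : (forall k, In k l -> 0 <= f k) -> 0 <= sumR l f.
Proof.
  induction l; simpl; intros H; [lra|].
  pose proof (H a (or_introl eq_refl)). pose proof (IHl (fun k h => H k (or_intror h))). lra.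
Qed.

Lemma sumR_eq0 l f : (forall k, In k l -> f k = 0) -> sumR l f = 0.
Proof. induction l; simpl; intros H; auto. rewrite H, IHl; auto. ring. Qed.

Lemma prodR_ext l f g : (forall k, In k l -> f k = g k) -> prodR l f = prodR l g.
Proof. induction l; simpl; intros H; auto. rewrite H, IHl; auto. Qed.

Lemma prodR_app l1 l2 f : prodR (l1 ++ l2) f = prodR l1 f * prodR l2 f.
Proof. induction l1; simpl; [ring|]. rewrite IHl1; ring. Qed.

Lemma prodR_pos l f : (forall k, In k l -> 0 < f k) -> 0 < prodR l f.
Proof. induction l; simpl; intros H; [lra|]. apply Rmult_lt_0_compat; auto. Qed.

Lemma prodR_factor d j (G : nat -> R) : (1 <= j <= d)%nat ->
  exists A, forall h : nat -> R, (forall k, k <> j -> h k = G k) -> prodR (seq 1 d) h = A * h j.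
Proof.
  intros Hj. exists (prodR (seq 1 (j - 1)) G * prodR (seq (S j) (d - j)) G). intros h Hh.
  replace (seq 1 d) with (seq 1 (j - 1) ++ seq j (S (d - j))).
  2:{ replace j with (1 + (j - 1))%nat at 2 by lia. rewrite <- seq_app. f_equal. lia. }
  rewrite prodR_app. simpl.
  rewrite (prodR_ext _ h G), (prodR_ext (seq (S j) (d - j)) h G); try ring;
    intros k Hk; apply in_seq in Hk; apply Hh; lia.
Qed.

Lemma in_seq1 j d : In j (seq 1 d) <-> (1 <= j <= d)%nat.
Proof. rewrite in_seq. lia. Qed.

Lemma list_argmax {A} (l : list A) (h : A -> R) (a : A) : In a l ->
  exists x, In x l /\ forall y, In y l -> h y <= h x.
Proof.
  revert a. induction l as [|b l IH]; simpl; intros a0 Ha; [contradiction|].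
  destruct l as [|c l'].
  - exists b; split; auto. intros y [<-|[]]; lra.
  - destruct (IH c (or_introl eq_refl)) as [x [Hx Hm]].
    destruct (Rle_dec (h b) (h x)).
    + exists x; split; auto. intros y [<-|Hy]; auto.
    + exists b; split; auto. intros y [<-|Hy]; [lra|]. specialize (Hm y Hy); lra.
Qed.

Lemma cv_const c : Un_cv (fun _ => c) c.
Proof. intros e He; exists 0%nat; intros; unfold R_dist. rewrite Rminus_diag, Rabs_R0; lra. Qed.

Definition lim_seq (u : nat -> R) : R := epsilon (inhabits 0) (Un_cv u).

Lemma lim_seq_spec u : (exists l, Un_cv u l) -> Un_cv u (lim_seq u).
Proof. apply epsilon_spec. Qed.

Lemma lim_seq_unique u l : Un_cv u l -> lim_seq u = l.
Proof. intros H. apply (UL_sequence u); auto. apply lim_seq_spec; eauto. Qed.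

Lemma upd_eq i j v : upd i j v j = v.
Proof. unfold upd. rewrite Nat.eqb_refl. auto. Qed.

Lemma upd_neq i j v k : k <> j -> upd i j v k = i k.
Proof. intros. unfold upd. destruct (Nat.eqb_spec k j); [lia|auto]. Qed.

Lemma upd_same i j : upd i j (i j) = i.
Proof. apply functional_extensionality. intros k. unfold upd. destruct (Nat.eqb_spec k j); subst; auto. Qed.

Lemma is_top_spec d N i : is_top d N i = true <-> forall j, (1 <= j <= d)%nat -> i j = N j.
Proof.
  unfold is_top. rewrite forallb_forall. split; intros H j Hj.
  - apply Nat.eqb_eq, H, in_seq1; auto.
  - apply Nat.eqb_eq, H, in_seq1; auto.
Qed.

Lemma expect_trans d p q i (g : option (nat -> nat) -> R) :
  expect g (trans d p q i) =
  sumR (seq 1 d) (fun j => p j (i j) * g (Some (upd i j (S (i j)))))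
  + sumR (seq 1 d) (fun j => if Nat.leb 2 (i j) then q j (i j) * g (Some (upd i j (pred (i j)))) else 0)
  + sumR (seq 1 d) (fun j => if Nat.eqb (i j) 1 then q j 1%nat else 0) * g None
  + (1 - sumR (seq 1 d) (fun k => p k (i k) + q k (i k))) * g (Some i).
Proof.
  unfold trans. rewrite !expect_app, expect_map, expect_flat_map.
  rewrite (sumR_ext _
    (fun k => expect g (if Nat.leb 2 (i k) then [(q k (i k), Some (upd i k (pred (i k))))] else []))
    (fun k => if Nat.leb 2 (i k) then q k (i k) * g (Some (upd i k (pred (i k)))) else 0)).
  - unfold expect at 1. cbn [fold_right fst snd]. ring.
  - intros k _. destruct (Nat.leb 2 (i k)); unfold expect; simpl; ring.
Qed.

Lemma hit_None d N p q n : hit d N p q n None = 0.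
Proof. destruct n; reflexivity. Qed.

Lemma hit_top d N p q n i : is_top d N i = true -> hit d N p q n (Some i) = 1.
Proof. intros E; destruct n; simpl; rewrite E; reflexivity. Qed.

Lemma hit_0 d N p q i : is_top d N i = false -> hit d N p q 0 (Some i) = 0.
Proof. intros E; simpl; rewrite E; reflexivity. Qed.

Lemma hit_S d N p q n i : is_top d N i = false ->
  hit d N p q (S n) (Some i) = expect (hit d N p q n) (trans d p q i).
Proof. intros E; simpl; rewrite E; reflexivity. Qed.

Lemma Ssum_S p q j m :
  Ssum p q j (S m) = Ssum p q j m + prodR (seq 1 m) (fun r => q j r / p j r).
Proof. unfold Ssum. rewrite seq_S, sumR_app. simpl. replace (m - 0)%nat with m by lia. ring. Qed.

Definition in_box (d : nat) (N f : nat -> nat) : Prop :=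
  forall j, (1 <= j <= d)%nat -> (1 <= f j <= N j)%nat.

Definition agree_outside (d : nat) (f g : nat -> nat) : Prop :=
  forall m, ~ (1 <= m <= d)%nat -> f m = g m.

Fixpoint box_states (N i : nat -> nat) (k : nat) : list (nat -> nat) :=
  match k with
  | O => [i]
  | S k' => flat_map (fun g => map (fun v => upd g (S k') v) (seq 1 (N (S k'))))
                     (box_states N i k')
  end.

Lemma box_states_complete N i k f : agree_outside k f i -> in_box k N f -> In f (box_states N i k).
Proof.
  revert f. induction k as [|k IH]; intros f Hs Hr; simpl.
  - left. apply functional_extensionality. intros m. symmetry. apply Hs. lia.
  - apply in_flat_map. exists (upd f (S k) (i (S k))). split.
    + apply IH.
      * intros m Hm. destruct (Nat.eq_dec m (S k)); [subst; rewrite upd_eq; auto|].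
        rewrite upd_neq; auto. apply Hs; lia.
      * intros j Hj. rewrite upd_neq; [|lia]. apply Hr; lia.
    + apply in_map_iff. exists (f (S k)). split.
      * apply functional_extensionality. intros m. unfold upd.
        destruct (Nat.eqb_spec m (S k)); subst; auto.
      * apply in_seq1. apply Hr. lia.
Qed.

Lemma box_states_sound N i k f : In f (box_states N i k) -> agree_outside k f i /\ in_box k N f.
Proof.
  revert f. induction k as [|k IH]; intros f Hf; simpl in Hf.
  - destruct Hf as [<-|[]]. split; [intros m _; auto|intros j Hj; lia].
  - apply in_flat_map in Hf as [g [Hg Hf]]. apply in_map_iff in Hf as [v [<- Hv]].
    apply in_seq1 in Hv. destruct (IH g Hg) as [S1 S2]. split.
    + intros m Hm. rewrite upd_neq; [apply S1; lia|lia].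
    + intros j Hj. destruct (Nat.eq_dec j (S k)); [subst; rewrite upd_eq; lia|].
      rewrite upd_neq; auto. apply S2; lia.
Qed.

Definition gap (N : nat -> nat) (l : list nat) (f : nat -> nat) : nat :=
  fold_right (fun j acc => (N j - f j) + acc)%nat 0%nat l.

Lemma gap_upd_notin N l f j v : ~ In j l -> gap N l (upd f j v) = gap N l f.
Proof. induction l; simpl; intros Hn; auto. rewrite upd_neq, IHl; auto. Qed.

Lemma gap_up N l f j : NoDup l -> In j l -> (f j < N j)%nat ->
  S (gap N l (upd f j (S (f j)))) = gap N l f.
Proof.
  induction l as [|a l IH]; simpl; intros Hd Hj Hlt; [contradiction|].
  inversion Hd; subst. destruct Hj as [->|Hj].
  - rewrite upd_eq, gap_upd_notin; auto. lia.
  - rewrite upd_neq; [|intros ->; contradiction]. rewrite <- IH; auto.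
Qed.

Lemma gap_pos N l f : gap N l f <> 0%nat -> exists j, In j l /\ (f j < N j)%nat.
Proof.
  induction l as [|a l IH]; simpl; intros H; [lia|].
  destruct (Nat.lt_ge_cases (f a) (N a)); [eauto|].
  destruct IH as [j [Hj Hlt]]; [lia|eauto].
Qed.

Lemma gap_eq0 N l f : gap N l f = 0%nat -> forall j, In j l -> (N j <= f j)%nat.
Proof.
  induction l; simpl; intros H j Hj; [contradiction|].
  destruct Hj as [->|Hj]; [lia|]. apply IHl; auto; lia.
Qed.

Section GamblersRuin.

Variables (d : nat) (N : nat -> nat) (p q : nat -> nat -> R).
Hypothesis HN : forall j, (1 <= j <= d)%nat -> (1 <= N j)%nat.
Hypothesis Hp01 : forall j i, (1 <= j <= d)%nat -> (i <= N j)%nat -> 0 <= p j i <= 1.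
Hypothesis Hq01 : forall j i, (1 <= j <= d)%nat -> (i <= N j)%nat -> 0 <= q j i <= 1.
Hypothesis Hbd : forall j, (1 <= j <= d)%nat ->
  p j 0%nat = 0 /\ q j 0%nat = 0 /\ p j (N j) = 0 /\ q j (N j) = 0.
Hypothesis Hpos : forall j i, (1 <= j <= d)%nat -> (1 <= i <= N j - 1)%nat ->
  0 < p j i /\ 0 < q j i.
Hypothesis Hsum : forall i : nat -> nat, (forall k, (1 <= k <= d)%nat -> (1 <= i k <= N k)%nat) ->
  sumR (seq 1 d) (fun k => p k (i k) + q k (i k)) <= 1.

Local Notation trans := (trans d p q).
Local Notation hit := (hit d N p q).
Local Notation is_top := (is_top d N).
Local Notation in_box := (in_box d N).
Local Notation agree_outside := (agree_outside d).

Lemma trans_support f : in_box f -> forall py, In py (trans f) ->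
  0 <= fst py /\ (fst py = 0 \/ snd py = None \/
                  exists g, snd py = Some g /\ in_box g /\ agree_outside g f).
Proof.
  intros Hf py Hin. unfold Defs.trans in Hin. rewrite !in_app_iff in Hin.
  destruct Hin as [Hin|[Hin|Hin]].
  - apply in_map_iff in Hin as [j [<- Hj]]. apply in_seq1 in Hj. simpl.
    specialize (Hf j Hj) as Hfj.
    split; [apply Hp01; auto; lia|].
    destruct (Nat.eq_dec (f j) (N j)) as [E|E].
    + left. rewrite E. apply (Hbd j Hj).
    + right; right. exists (upd f j (S (f j))). split; [reflexivity|split].
      * intros k Hk. destruct (Nat.eq_dec k j); [subst; rewrite upd_eq; lia|].
        rewrite upd_neq; auto.
      * intros m Hm. apply upd_neq. intros ->. auto.
  - apply in_flat_map in Hin as [j [Hj Hin]]. apply in_seq1 in Hj.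
    specialize (Hf j Hj) as Hfj.
    destruct (Nat.leb_spec 2 (f j)); [|contradiction].
    destruct Hin as [<-|[]]. simpl.
    split; [apply Hq01; auto; lia|].
    right; right. exists (upd f j (pred (f j))). split; [reflexivity|split].
    * intros k Hk. destruct (Nat.eq_dec k j); [subst; rewrite upd_eq; lia|].
      rewrite upd_neq; auto.
    * intros m Hm. apply upd_neq. intros ->. auto.
  - destruct Hin as [<-|[<-|[]]]; simpl.
    + split; [|right; left; auto]. apply sumR_nonneg. intros k Hk. apply in_seq1 in Hk.
      destruct (Nat.eqb (f k) 1); [|lra]. apply Hq01; auto; specialize (HN k Hk); lia.
    + split; [pose proof (Hsum f Hf); lra|]. right; right.
      exists f. split; [reflexivity|split; [exact Hf|intros m _; reflexivity]].
Qed.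

Lemma trans_mass f : in_box f -> expect (fun _ => 1) (trans f) = 1.
Proof.
  intros Hf. rewrite expect_trans.
  rewrite (sumR_ext _ (fun j => if Nat.leb 2 (f j) then q j (f j) * 1 else 0)
             (fun j => q j (f j) - (if Nat.eqb (f j) 1 then q j 1%nat else 0))).
  - rewrite (sumR_ext _ (fun j => p j (f j) * 1) (fun j => p j (f j))) by (intros; ring).
    rewrite sumR_plus, sumR_minus. ring.
  - intros k Hk. apply in_seq1 in Hk. specialize (Hf k Hk).
    destruct (Nat.leb_spec 2 (f k)), (Nat.eqb_spec (f k) 1); try lia.
    + ring.
    + rewrite e. ring.
Qed.

Lemma expect_trans_le u w f : in_box f -> u None <= w None ->
  (forall g, in_box g -> u (Some g) <= w (Some g)) -> expect u (trans f) <= expect w (trans f).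
Proof.
  intros Hf HNone HSome. apply expect_le. intros py Hpy.
  destruct (trans_support f Hf py Hpy) as [G1 [G2|[G2|[g [G2 [G3 _]]]]]];
    split; auto; right; rewrite G2; auto.
Qed.

Lemma Ssum_ge1 j m : (1 <= j <= d)%nat -> (1 <= m <= N j)%nat -> 1 <= Ssum p q j m.
Proof.
  intros Hj. induction m as [|m IH]; intros Hm; [lia|].
  rewrite Ssum_S. destruct m as [|m]; [unfold Ssum; simpl; lra|].
  assert (0 < prodR (seq 1 (S m)) (fun r => q j r / p j r)).
  { apply prodR_pos. intros r Hr. apply in_seq1 in Hr.
    destruct (Hpos j r Hj) as [P Q]; [lia|]. apply Rdiv_lt_0_compat; auto. }
  specialize (IH ltac:(lia)). lra.
Qed.

Lemma Ssum_harmonic j i : (1 <= j <= d)%nat -> (1 <= i <= N j)%nat ->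
  p j i * (Ssum p q j (S i) - Ssum p q j i) + q j i * (Ssum p q j (pred i) - Ssum p q j i) = 0.
Proof.
  intros Hj Hi. destruct i as [|m]; [lia|]. simpl pred.
  rewrite (Ssum_S p q j (S m)), (Ssum_S p q j m), seq_S, prodR_app. simpl.
  destruct (Nat.eq_dec (S m) (N j)) as [E|E].
  - destruct (Hbd j Hj) as [_ [_ [P Q]]]. rewrite E, P, Q. ring.
  - destruct (Hpos j (S m) Hj) as [P Q]; [lia|]. field. lra.
Qed.

Definition rho_num (f : nat -> nat) : R := prodR (seq 1 d) (fun j => Ssum p q j (f j)).

Definition rho (f : nat -> nat) : R := rho_num f / rho_num N.

Definition rho_ext (x : option (nat -> nat)) : R :=
  match x with None => 0 | Some f => rho f end.

Lemma rho_num_upd f j : (1 <= j <= d)%nat ->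
  exists A, forall v, rho_num (upd f j v) = A * Ssum p q j v.
Proof.
  intros Hj. destruct (prodR_factor d j (fun k => Ssum p q k (f k)) Hj) as [A HA].
  exists A. intros v. unfold rho_num. rewrite HA, upd_eq; auto.
  intros k Hk. rewrite upd_neq; auto.
Qed.

Lemma rho_num_pos f : in_box f -> 0 < rho_num f.
Proof.
  intros Hf. apply prodR_pos. intros k Hk. apply in_seq1 in Hk.
  pose proof (Ssum_ge1 k (f k) Hk (Hf k Hk)). lra.
Qed.

Lemma rho_num_N_pos : 0 < rho_num N.
Proof. apply rho_num_pos. intros j Hj. specialize (HN j Hj). lia. Qed.

Lemma rho_nonneg f : in_box f -> 0 <= rho f.
Proof. intros Hf. apply Rlt_le, Rdiv_lt_0_compat; [apply rho_num_pos | apply rho_num_N_pos]; auto. Qed.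

Lemma rho_top f : is_top f = true -> rho f = 1.
Proof.
  intros E. pose proof rho_num_N_pos. unfold rho, rho_num in *. rewrite (prodR_ext _ _ (fun j => Ssum p q j (N j))).
  - field. lra.
  - intros k Hk. apply in_seq1 in Hk. rewrite (proj1 (is_top_spec d N f) E k Hk). auto.
Qed.

Lemma rho_harmonic f : in_box f -> expect rho_ext (trans f) = rho f.
Proof.
  intros Hf. rewrite expect_trans. cbn [rho_ext].
  (* From level 1 the down-step is replaced by absorption in [-infinity], where
     [rho_ext] is 0; the product formula also gives 0 at level 0. *)
  assert (Hdown : forall j, In j (seq 1 d) ->
    (if Nat.leb 2 (f j) then q j (f j) * rho (upd f j (pred (f j))) else 0)
    = q j (f j) * rho (upd f j (pred (f j)))).
  { intros j Hj. apply in_seq1 in Hj. destruct (Nat.leb_spec 2 (f j)); auto.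
    replace (pred (f j)) with 0%nat by (specialize (Hf j Hj); lia).
    destruct (rho_num_upd f j Hj) as [A HA]. unfold rho. rewrite HA. unfold Ssum; simpl.
    unfold Rdiv; ring. }
  assert (Hstep : forall j, In j (seq 1 d) ->
    (p j (f j) * rho (upd f j (S (f j))) + q j (f j) * rho (upd f j (pred (f j))))
    + (p j (f j) + q j (f j)) * (- rho f) = 0).
  { intros j Hj. apply in_seq1 in Hj.
    destruct (rho_num_upd f j Hj) as [A HA].
    assert (Hself : rho_num f = A * Ssum p q j (f j)) by (rewrite <- HA, upd_same; reflexivity).
    unfold rho. rewrite !HA, Hself.
    pose proof (Ssum_harmonic j (f j) Hj (Hf j Hj)) as H1d.
    replace (p j (f j) * (A * Ssum p q j (S (f j)) / rho_num N)
             + q j (f j) * (A * Ssum p q j (pred (f j)) / rho_num N)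
             + (p j (f j) + q j (f j)) * - (A * Ssum p q j (f j) / rho_num N))
      with (A / rho_num N * (p j (f j) * (Ssum p q j (S (f j)) - Ssum p q j (f j))
             + q j (f j) * (Ssum p q j (pred (f j)) - Ssum p q j (f j)))) by (unfold Rdiv; ring).
    rewrite H1d. ring. }
  rewrite (sumR_ext _ _ _ Hdown).
  pose proof (sumR_eq0 _ _ Hstep) as E. rewrite !sumR_plus, sumR_mult_r in E. lra.
Qed.

Lemma hit_nonneg n f : in_box f -> 0 <= hit n (Some f).
Proof.
  revert f. induction n as [|n IH]; intros f Hf; destruct (is_top f) eqn:E;
    try (rewrite hit_top; auto; lra).
  - rewrite hit_0; auto; lra.
  - rewrite hit_S, <- (Rmult_0_l (expect (fun _ => 1) (trans f))), <- expect_const; auto.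
    apply expect_trans_le; auto. rewrite hit_None; lra.
Qed.

Lemma hit_le_rho n f : in_box f -> hit n (Some f) <= rho f.
Proof.
  revert f. induction n as [|n IH]; intros f Hf; destruct (is_top f) eqn:E;
    try (rewrite hit_top, rho_top; auto; lra).
  - rewrite hit_0; auto. apply rho_nonneg; auto.
  - rewrite hit_S, <- rho_harmonic; auto. apply expect_trans_le; auto.
    rewrite hit_None; simpl; lra.
Qed.

Lemma hit_growing f : in_box f -> Un_growing (fun n => hit n (Some f)).
Proof.
  intros Hf n. revert f Hf. induction n as [|n IH]; intros f Hf; destruct (is_top f) eqn:E;
    try (rewrite !hit_top; auto; lra).
  - rewrite hit_0; auto. apply hit_nonneg; auto.
  - rewrite (hit_S d N p q n), (hit_S d N p q (S n)); auto. apply expect_trans_le; auto.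
    rewrite !hit_None; lra.
Qed.

Definition hit_lim (x : option (nat -> nat)) : R := lim_seq (fun n => hit n x).

Lemma hit_cv f : in_box f -> Un_cv (fun n => hit n (Some f)) (hit_lim (Some f)).
Proof.
  intros Hf. apply lim_seq_spec.
  destruct (growing_cv (fun n => hit n (Some f))) as [l Hl]; eauto using hit_growing.
  exists (rho f). intros x [n ->]. apply hit_le_rho; auto.
Qed.

Lemma hit_None_cv : Un_cv (fun n => hit n None) 0.
Proof.
  replace (fun n => hit n None) with (fun _ : nat => 0); [apply cv_const|].
  apply functional_extensionality. intros n. rewrite hit_None. auto.
Qed.

Lemma hit_lim_None : hit_lim None = 0.
Proof. apply lim_seq_unique, hit_None_cv. Qed.

Lemma hit_lim_top f : is_top f = true -> hit_lim (Some f) = 1.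
Proof.
  intros E. apply lim_seq_unique. replace (fun n => hit n (Some f)) with (fun _ : nat => 1).
  - apply cv_const.
  - apply functional_extensionality. intros n. rewrite hit_top; auto.
Qed.

Lemma hit_lim_le_rho f : in_box f -> hit_lim (Some f) <= rho f.
Proof.
  intros Hf. eapply Rle_cv_lim; [intros n; apply (hit_le_rho n f Hf) | apply hit_cv, Hf | apply cv_const].
Qed.

Lemma hit_lim_harmonic f : in_box f -> is_top f = false ->
  expect hit_lim (trans f) = hit_lim (Some f).
Proof.
  intros Hf E. apply (UL_sequence (fun n => expect (hit n) (trans f))).
  - apply expect_cv. intros py Hpy.
    destruct (trans_support f Hf py Hpy) as [_ [G|[G|[g [G [Hg _]]]]]]; auto; right; rewrite G.
    + rewrite hit_lim_None. apply hit_None_cv.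
    + apply hit_cv; auto.
  - intros e He. destruct (hit_cv f Hf e He) as [M HM]. exists M. intros n Hn.
    rewrite <- hit_S; auto.
Qed.

Section MaximumPrinciple.

Variable v : option (nat -> nat) -> R.
Hypothesis v_None : v None = 0.
Hypothesis v_top : forall f, is_top f = true -> v (Some f) = 0.
Hypothesis v_nonneg : forall f, in_box f -> 0 <= v (Some f).
Hypothesis v_harmonic : forall f, in_box f -> is_top f = false ->
  expect v (trans f) = v (Some f).

Definition locally_max (f : nat -> nat) : Prop :=
  forall g, in_box g -> agree_outside g f -> v (Some g) <= v (Some f).

(* Every term of [expect (v - v f) (trans f)] is [<= 0] and they sum to 0,
   so each up-step, having positive probability, lands on the same value. *)
Lemma locally_max_up f j : in_box f -> is_top f = false -> locally_max f ->
  (1 <= j <= d)%nat -> (f j < N j)%nat ->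
  v (Some (upd f j (S (f j)))) = v (Some f).
Proof.
  intros Hf E Hmax Hj Hlt. set (M := v (Some f)).
  assert (Hzero : expect (fun y => v y - M) (trans f) = 0).
  { rewrite expect_sub, expect_const, trans_mass, v_harmonic; auto. unfold M. ring. }
  assert (Hterms : forall py, In py (trans f) -> fst py * (v (snd py) - M) <= 0).
  { intros py Hpy. destruct (trans_support f Hf py Hpy) as [G1 [G2|[G2|[g [G2 [G3 G4]]]]]].
    - rewrite G2; lra.
    - rewrite G2, v_None. pose proof (Rmult_le_pos _ _ G1 (v_nonneg f Hf)). unfold M. lra.
    - assert (v (snd py) - M <= 0) by (rewrite G2; pose proof (Hmax g G3 G4); unfold M; lra).
      pose proof (Rmult_le_compat_l _ _ _ G1 H). lra. }
  assert (Hin : In (p j (f j), Some (upd f j (S (f j)))) (trans f)).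
  { apply in_or_app. left. apply (in_map (fun j => (p j (f j), Some (upd f j (S (f j)))))).
    apply in_seq1; auto. }
  pose proof (expect_nonpos_eq0 _ _ Hterms Hzero _ Hin) as Hup. simpl in Hup.
  destruct (Hpos j (f j) Hj) as [P _]; [specialize (Hf j Hj); lia|].
  apply Rmult_integral in Hup as [Hup|Hup]; unfold M in *; lra.
Qed.

Lemma locally_max_zero k f : in_box f -> locally_max f -> gap N (seq 1 d) f = k -> v (Some f) = 0.
Proof.
  revert f. induction k as [|k IH]; intros f Hf Hmax Hgap;
    (destruct (is_top f) eqn:E; [apply v_top; auto|]).
  - exfalso. assert (is_top f = true) as T; [|congruence]. apply is_top_spec. intros j Hj.
    pose proof (gap_eq0 N _ f Hgap j (proj2 (in_seq1 j d) Hj)). specialize (Hf j Hj). lia.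
  - destruct (gap_pos N (seq 1 d) f ltac:(lia)) as [j [Hj Hlt]].
    apply in_seq1 in Hj as Hj'.
    set (g := upd f j (S (f j))).
    assert (Hg : in_box g).
    { intros k' Hk. unfold g. destruct (Nat.eq_dec k' j); [subst; rewrite upd_eq; lia|].
      rewrite upd_neq; auto. }
    assert (Hgf : agree_outside g f).
    { intros m Hm. unfold g. apply upd_neq. intros ->. auto. }
    assert (Hvg : v (Some g) = v (Some f)) by (apply locally_max_up; auto).
    rewrite <- Hvg. apply IH; auto.
    + intros h Hh Hhg. rewrite Hvg. apply Hmax; auto.
      intros m Hm. rewrite Hhg, Hgf; auto.
    + pose proof (gap_up N (seq 1 d) f j (seq_NoDup d 1) Hj Hlt). fold g in H. lia.
Qed.

Theorem harmonic_vanishes f : in_box f -> v (Some f) = 0.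
Proof.
  intros Hf.
  assert (Hi : In f (box_states N f d)) by (apply box_states_complete; auto; intros m _; auto).
  destruct (list_argmax _ (fun g => v (Some g)) f Hi) as [x [Hx Hmax]].
  destruct (box_states_sound N f d x Hx) as [Hxf Hxbox].
  assert (Hx0 : v (Some x) = 0).
  { apply (locally_max_zero (gap N (seq 1 d) x) x Hxbox); auto. intros g Hg Hgx. apply Hmax.
    apply box_states_complete; auto. intros m Hm. rewrite Hgx, Hxf; auto. }
  pose proof (Hmax f Hi). pose proof (v_nonneg f Hf). simpl in *. lra.
Qed.

End MaximumPrinciple.

Lemma hit_lim_eq_rho f : in_box f -> hit_lim (Some f) = rho f.
Proof.
  intros Hf.
  enough (rho_ext (Some f) - hit_lim (Some f) = 0) by (simpl in *; lra).
  apply (harmonic_vanishes (fun y => rho_ext y - hit_lim y)); auto.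
  - rewrite hit_lim_None. simpl. ring.
  - intros g E. simpl. rewrite rho_top, hit_lim_top; auto. ring.
  - intros g Hg. simpl. pose proof (hit_lim_le_rho g Hg). lra.
  - intros g Hg E. rewrite expect_sub, rho_harmonic, hit_lim_harmonic; auto.
Qed.

End GamblersRuin.

Theorem theorem2p1 (d : nat) (N : nat -> nat) (p q : nat -> nat -> R)
  (Hd : (1 <= d)%nat)
  (HN : forall j, (1 <= j <= d)%nat -> (1 <= N j)%nat)
  (Hp01 : forall j i, (1 <= j <= d)%nat -> (i <= N j)%nat -> 0 <= p j i <= 1)
  (Hq01 : forall j i, (1 <= j <= d)%nat -> (i <= N j)%nat -> 0 <= q j i <= 1)
  (Hbd : forall j, (1 <= j <= d)%nat ->
           p j 0%nat = 0 /\ q j 0%nat = 0 /\ p j (N j) = 0 /\ q j (N j) = 0)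
  (Hpos : forall j i, (1 <= j <= d)%nat -> (1 <= i <= N j - 1)%nat ->
           0 < p j i /\ 0 < q j i)
  (Hsum : forall i : nat -> nat, (forall k, (1 <= k <= d)%nat -> (1 <= i k <= N k)%nat) ->
           sumR (seq 1 d) (fun k => p k (i k) + q k (i k)) <= 1) :
  forall i : nat -> nat, (forall j, (1 <= j <= d)%nat -> (1 <= i j <= N j)%nat) ->
    Un_cv (fun n => hit d N p q n (Some i))
      (prodR (seq 1 d) (fun j => Ssum p q j (i j)) /
       prodR (seq 1 d) (fun j => Ssum p q j (N j))).
Proof.
  intros i Hi.
  change (Un_cv (fun n => hit d N p q n (Some i)) (rho d N p q i)).
  rewrite <- (hit_lim_eq_rho d N p q HN Hp01 Hq01 Hbd Hpos Hsum i Hi).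
  apply (hit_cv d N p q HN Hp01 Hq01 Hbd Hpos Hsum i Hi).
Qed.
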